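(* Let $G$ be a connected graph with $n\ge2$ vertices, $m$ edges, maximum degree $\Delta$ and minimum degree $\delta$, and assume $\gamma_n=0$. Then: if $G$ is not regular, $$QE(G)\ >\ \frac{2m+\frac12(\Delta-\delta)^2}{2\Delta-\frac{2m}{n}};$$ and if $G$ is regular, $QE(G)\ge n$, with equality if and only if $G\cong K_{\frac n2,\frac n2}$.
   Context: All graphs are finite, simple and undirected. For a graph $G$ with $n$ vertices and $m$ edges, let $q_1\ge\cdots\ge q_n\ge0$ be the eigenvalues of the signless Laplacian $Q(G)=D(G)+A(G)$ ($D(G)$ the diagonal degree matrix, $A(G)$ the adjacency matrix). The signless Laplacian energy is $QE(G)=\sum_{i=1}^n|q_i-\frac{2m}{n}|$. Let $\gamma_1\ge\gamma_2\ge\cdots\ge\gamma_n\ge0$ denote the numbers $|q_i-\frac{2m}{n}|$, $i=1,\dots,n$, arranged in nonincreasing order. *)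

From HB Require Import structures.
From mathcomp Require Import all_boot all_order all_algebra.
From mathcomp Require Import perm reals.
Set Implicit Arguments. Unset Strict Implicit. Unset Printing Implicit Defensive.
Import Order.TTheory GRing.Theory Num.Theory.
Local Open Scope ring_scope.

Definition simple_graph n (e : rel 'I_n) : Prop := symmetric e /\ irreflexive e.

Definition connected_graph n (e : rel 'I_n) : Prop := forall x y, connect e x y.

Definition deg n (e : rel 'I_n) (x : 'I_n) : nat := #|[set y | e x y]|.

Definition edges n (e : rel 'I_n) : {set {set 'I_n}} :=
  [set E : {set 'I_n} | [exists x, exists y, e x y && (E == [set x; y])]].

Definition nedges n (e : rel 'I_n) : nat := #|edges e|.

Definition maxdeg n (e : rel 'I_n) : nat := \max_(x : 'I_n) deg e x.
Definition mindeg n (e : rel 'I_n) : nat := \big[minn/n]_(x : 'I_n) deg e x.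

Definition regular n (e : rel 'I_n) : Prop := forall x y, deg e x = deg e y.

Definition signlessLap (R : nzRingType) n (e : rel 'I_n) : 'M[R]_n :=
  \matrix_(i, j) ((deg e i)%:R *+ (i == j) + (e i j)%:R).

Definition avgdeg (R : realType) n (e : rel 'I_n) : R :=
  (2 * nedges e)%:R / n%:R.

Definition Qspectrum (R : realType) n (e : rel 'I_n) (s : seq R) : Prop :=
  char_poly (signlessLap R e) = \prod_(x <- s) ('X - x%:P).

Definition QE (R : realType) n (e : rel 'I_n) (s : seq R) : R :=
  \sum_(q <- s) `|q - avgdeg R e|.

(* gamma_1 >= ... >= gamma_n : the |q_i - 2m/n| in nonincreasing order *)
Definition gammas (R : realType) n (e : rel 'I_n) (s : seq R) : seq R :=
  sort (fun x y : R => y <= x) [seq `|q - avgdeg R e| | q <- s].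

Definition gamma_last (R : realType) n (e : rel 'I_n) (s : seq R) : R :=
  nth 0 (gammas e s) n.-1.

Definition graph_iso n (e1 e2 : rel 'I_n) : Prop :=
  exists f : {perm 'I_n}, forall x y, e1 x y = e2 (f x) (f y).

Definition Kbip n (k : nat) : rel 'I_n := fun x y => (x < k)%N != (y < k)%N.

From HB Require Import structures.
From mathcomp Require Import all_boot all_order all_algebra.
From mathcomp Require Import perm reals.
From mathcomp Require Import ring lra zify.
Set Implicit Arguments. Unset Strict Implicit. Unset Printing Implicit Defensive.
Import Order.TTheory GRing.Theory Num.Theory.
Local Open Scope ring_scope.

(* Let q_1, ..., q_n be the Q-eigenvalues, a = 2m/n the average degree and
   QE = sum_q |q - a|.  The proof rests on three facts.
   - Moments: sum_q q = tr Q = sum_i d_i = 2m and sum_q q^2 = tr Q^2 =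
     sum_i (d_i^2 + d_i), so sum_q (q - a)^2 = 2m + sum_i (d_i - a)^2.
   - Range: every q lies in [0, 2 Delta] (a Gershgorin argument at an entry of
     maximal modulus of an eigenvector), and 2 Delta is a Q-eigenvalue of a
     connected graph only if the graph is regular.
   - If |x| <= B for every x in a list, then sum x^2 <= B sum |x|, with
     equality iff every |x| is 0 or B.
   For non-regular G take B = 2 Delta - a: the inequality is then strict, and
   sum_i (d_i - a)^2 >= (Delta - delta)^2 / 2.  For r-regular G take B = r:
   sum_q (q - r)^2 = rn gives QE >= n, with equality iff the Q-spectrum lies in
   {0, r, 2r}, i.e. iff the adjacency matrix A = Q - rI satisfies A^3 = r^2 A
   (Q being symmetric), which for a connected graph characterises K_{r,r}. *)

Section MatrixSpectrum.
Variable R : numFieldType.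

Lemma char_poly_horner n (A : 'M[R]_n) t : (char_poly A).[t] = \det (t%:M - A).
Proof.
rewrite /char_poly -horner_evalE -det_map_mx; congr (\det _).
by apply/matrixP=> i j; rewrite !mxE rmorphB /= rmorphMn /= !horner_evalE hornerX hornerC.
Qed.

Lemma size_spectrum n (A : 'M[R]_n) s :
  char_poly A = \prod_(x <- s) ('X - x%:P) -> size s = n.
Proof. by move=> h; have := size_char_poly A; rewrite h size_prod_XsubC => -[]. Qed.

Lemma sum_spectrum n (A : 'M[R]_n) s :
  char_poly A = \prod_(x <- s) ('X - x%:P) -> \sum_(x <- s) x = \tr A.
Proof.
move=> h; have hs := size_spectrum h.
case: n A h hs => [|n] A h hs.
  by case: s h hs => // _ _; rewrite big_nil /mxtrace big_ord0.
have := char_poly_trace A (erefl _); rewrite h.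
have -> : n.+1.-1 = (size s).-1 by rewrite hs.
by rewrite coefPn_prod_XsubC ?hs // => /eqP; rewrite eqr_opp => /eqP.
Qed.

(* det (t^2 I - A^2) = det (t I - A) det (t I + A), the latter written
   as (-1)^n det (-t I - A). *)
Lemma det_sub_sqr n (A : 'M[R]_n) t :
  \det ((t * t)%:M - A *m A) = \det (t%:M - A) * ((-1) ^+ n * \det ((- t)%:M - A)).
Proof.
rewrite -detZ -det_mulmx; congr (\det _).
rewrite scalerBr !scaleN1r opprK (raddfN (@scalar_mx R n)) opprK mulmxDr !mulmxBl.
rewrite mul_mx_scalar mul_scalar_mx scalar_mxM.
by rewrite addrA [A *m t%:M]mul_mx_scalar subrK mul_mx_scalar.
Qed.

Lemma prod_opp_sub (s : seq R) t :
  (-1) ^+ size s * \prod_(x <- s) (- t - x) = \prod_(x <- s) (t + x).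
Proof.
elim: s => [|x s IH]; rewrite ?big_nil ?big_cons ?expr0 ?mulr1 //=.
by rewrite exprS -IH; ring.
Qed.

(* The eigenvalues of A^2 are the squares of those of A; the two
   characteristic polynomials agree at the infinitely many points i^2. *)
Lemma spectrum_sqr n (A : 'M[R]_n) s :
  char_poly A = \prod_(x <- s) ('X - x%:P) ->
  char_poly (A *m A) = \prod_(x <- s) ('X - (x ^+ 2)%:P).
Proof.
move=> h; have hs := size_spectrum h.
pose p := char_poly (A *m A) - \prod_(x <- s) ('X - (x ^+ 2)%:P).
suff : p = 0 by move/eqP; rewrite subr_eq0 => /eqP.
pose rs := [seq (i%:R : R) ^+ 2 | i <- iota 0 (size p)].
apply: (@roots_geq_poly_eq0 _ p rs); last by rewrite size_map size_iota.
- apply/allP => _ /mapP [i _ ->]; rewrite /root /p hornerD hornerN.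
  rewrite char_poly_horner expr2 det_sub_sqr -!char_poly_horner h !horner_prod.
  under eq_bigr do rewrite hornerXsubC.
  under [X in _ * (_ * X)]eq_bigr do rewrite hornerXsubC.
  under [X in _ - X]eq_bigr do rewrite hornerXsubC.
  rewrite -hs prod_opp_sub -big_split /= subr_eq0; apply/eqP/eq_bigr => x _; ring.
- rewrite map_inj_uniq ?iota_uniq // => i j /eqP.
  by rewrite -!natrX eqr_nat eqn_exp2r // => /eqP.
Qed.

Lemma sum_sqr_spectrum n (A : 'M[R]_n) s :
  char_poly A = \prod_(x <- s) ('X - x%:P) -> \sum_(x <- s) x ^+ 2 = \tr (A *m A).
Proof.
move=> /spectrum_sqr h2.
rewrite -(big_map (fun x => x ^+ 2) xpredT (fun y => 'X - y%:P)) in h2.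
by rewrite -(big_map (fun x => x ^+ 2) xpredT id) (sum_spectrum h2).
Qed.
End MatrixSpectrum.

Section SquaredDeviations.
Variable R : comNzRingType.

Lemma sum_sqr_dev_seq (l : seq R) a :
  \sum_(x <- l) (x - a) ^+ 2 =
  \sum_(x <- l) x ^+ 2 - 2 * a * \sum_(x <- l) x + (size l)%:R * a ^+ 2.
Proof.
elim: l => [|x l IH]; first by rewrite !big_nil /=; ring.
by rewrite !big_cons IH /= -addn1 natrD; ring.
Qed.

Lemma sum_sqr_dev_ord n (F : 'I_n -> R) a :
  \sum_i (F i - a) ^+ 2 = \sum_i F i ^+ 2 - 2 * a * \sum_i F i + n%:R * a ^+ 2.
Proof.
rewrite (eq_bigr (fun i => F i ^+ 2 - 2 * a * F i + a ^+ 2)); last by move=> i _; ring.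
by rewrite big_split sumrB /= -mulr_sumr sumr_const card_ord !mulr_natl.
Qed.
End SquaredDeviations.

(* If every |u x| is at most B, then sum u^2 <= B sum |u|, with equality
   exactly when each |u x| is 0 or B: the difference is sum |u| (B - |u|). *)
Section BoundedSquares.
Variable R : realFieldType.
Variables (l : seq R) (u : R -> R) (B : R).
Hypothesis hB : forall x, x \in l -> `|u x| <= B.

Let gap_sum : B * \sum_(x <- l) `|u x| - \sum_(x <- l) u x ^+ 2 =
  \sum_(x <- l) `|u x| * (B - `|u x|).
Proof.
rewrite mulr_sumr -sumrB; apply: eq_bigr => x _.
by rewrite -(real_normK (num_real (u x))); ring.
Qed.

Let gap_ge0 x : x \in l -> 0 <= `|u x| * (B - `|u x|).
Proof. by move=> hx; rewrite mulr_ge0 // subr_ge0 hB. Qed.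

Lemma sum_sqr_le_bound : \sum_(x <- l) u x ^+ 2 <= B * \sum_(x <- l) `|u x|.
Proof. by rewrite -subr_ge0 gap_sum big_seq sumr_ge0. Qed.

Lemma sum_sqr_eq_bound : \sum_(x <- l) u x ^+ 2 = B * \sum_(x <- l) `|u x| <->
  (forall x, x \in l -> `|u x| = 0 \/ `|u x| = B).
Proof.
split=> [h x hx|h].
  have : \sum_(y <- l) `|u y| * (B - `|u y|) == 0 by rewrite -gap_sum h subrr.
  rewrite big_seq psumr_eq0; last exact: gap_ge0.
  move=> /allP /(_ x hx); rewrite hx mulf_eq0 subr_eq0.
  by move=> /orP [] /eqP ->; [left | right].
apply/eqP; rewrite eq_sym -subr_eq0 gap_sum big_seq big1 // => x /h [] ->.
  by rewrite mul0r.
by rewrite subrr mulr0.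
Qed.
End BoundedSquares.

(* The gap between any two members of a family bounds its total squared
   deviation from a, as (F i - a)^2 + (F j - a)^2 >= (F i - F j)^2 / 2. *)
Lemma sum_sqr_dev_ge_range (R : realFieldType) n (F : 'I_n -> R) a i j :
  2^-1 * (F i - F j) ^+ 2 <= \sum_k (F k - a) ^+ 2.
Proof.
have hge0 (P : pred 'I_n) : 0 <= \sum_(k | P k) (F k - a) ^+ 2.
  by apply: sumr_ge0 => k _; exact: sqr_ge0.
case: (eqVneq i j) => [->|hij]; first by rewrite subrr expr0n mulr0 hge0.
rewrite (bigD1 i) //= (bigD1 j) /=; last by rewrite eq_sym.
have -> : (F i - a) ^+ 2 + ((F j - a) ^+ 2 + \sum_(k | (k != i) && (k != j)) (F k - a) ^+ 2) =
    2^-1 * (F i - F j) ^+ 2 + (2^-1 * (F i + F j - 2 * a) ^+ 2 +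
    \sum_(k | (k != i) && (k != j)) (F k - a) ^+ 2) by field.
rewrite lerDl; apply: addr_ge0; last exact: hge0.
by rewrite mulr_ge0 ?invr_ge0 ?ler0n ?sqr_ge0.
Qed.

Lemma abs_0_or_eq (R : realFieldType) (y c : R) : 0 <= c ->
  (`|y| = 0 \/ `|y| = c) <-> y * (y ^+ 2 - c ^+ 2) = 0.
Proof.
move=> hc; rewrite -(real_normK (num_real y)); split.
  by case=> [/normr0P/eqP ->|->]; rewrite ?mul0r ?subrr ?mulr0.
move/eqP; rewrite mulf_eq0 subr_eq0 eqrXn2 ?normr_ge0 // => /orP [/eqP ->|/eqP ->].
  by left; rewrite normr0.
by right.
Qed.

(* Handshake lemma: every edge {x, y} is counted once at x and once at y. *)
Section Handshake.
Variables (n : nat) (e : rel 'I_n).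
Hypotheses (sym_e : symmetric e) (irr_e : irreflexive e).

Lemma deg_edges x : deg e x = #|[set E in edges e | x \in E]|.
Proof.
have -> : [set E in edges e | x \in E] = (fun y => [set x; y]) @: [set y | e x y].
  apply/setP => E; rewrite inE; apply/andP/imsetP; last first.
    move=> [y]; rewrite inE => hxy ->; split; last by rewrite !inE eqxx.
    by rewrite inE; apply/existsP; exists x; apply/existsP; exists y; rewrite hxy eqxx.
  rewrite inE => -[/existsP [a /existsP [b /andP [hab /eqP ->]]]].
  rewrite !inE => /orP [/eqP ->|/eqP ->]; first by exists b; rewrite ?inE.
  by exists a; rewrite ?inE 1?sym_e // setUC.
rewrite /deg card_in_imset // => y1 y2; rewrite !inE => h1 h2 heq.
have : y1 \in [set x; y2] by rewrite -heq !inE eqxx orbT.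
rewrite !inE => /orP [/eqP hx|/eqP //].
by move: h1; rewrite -hx irr_e.
Qed.

Lemma handshake : (\sum_x deg e x = 2 * nedges e)%N.
Proof.
under eq_bigr do rewrite deg_edges -sum1_card.
rewrite (eq_bigr (fun x => \sum_E (if (E \in edges e) && (x \in E) then 1 else 0))%N); last first.
  by move=> x _; rewrite big_mkcond; apply: eq_bigr => E _; rewrite inE.
rewrite exchange_big /nedges -sum1_card big_mkcond big_distrr /=.
rewrite [RHS]big_mkcond; apply: eq_bigr => E _.
case: ifP => hE; last by rewrite big1 // => x _; rewrite andFb.
rewrite muln1 (eq_bigr (fun x => if x \in E then 1 else 0)%N); last by move=> x _; rewrite andTb.
rewrite -big_mkcond sum1_card.
move: hE; rewrite inE => /existsP [a /existsP [b /andP [hab /eqP ->]]].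
by rewrite cards2; case: (eqVneq a b) hab => [->|//]; rewrite irr_e.
Qed.
End Handshake.

Lemma connect_propagate n (e : rel 'I_n) (P : pred 'I_n) :
  (forall a b, P a -> e a b -> P b) -> forall x y, connect e x y -> P x -> P y.
Proof.
move=> hP x y /connectP [p hp ->]; elim: p x hp => [//|z p IH] x /=.
by case/andP => hxz hp hx; apply: IH hp (hP _ _ hx hxz).
Qed.

Lemma connected_deg_gt0 m (e : rel 'I_m.+1) :
  (0 < m)%N -> connected_graph e -> forall x, (0 < deg e x)%N.
Proof.
move=> hm hc x.
pose y : 'I_m.+1 := if x == ord0 then ord_max else ord0.
have hyx : y != x.
  rewrite /y; case: (eqVneq x ord0) => [->|hx]; last by rewrite eq_sym.
  by apply/eqP => /(congr1 val) /= h; move: hm; rewrite h.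
have /connectP [p hp hl] := hc x y.
case: p hp hl => [_ hl|z p /= /andP [hxz _] _]; first by move: hyx; rewrite hl eqxx.
by apply/card_gt0P; exists z; rewrite inE.
Qed.

Lemma bigmin_attained (I : eqType) (r : seq I) (F : I -> nat) k :
  r != [::] -> (forall x, F x <= k)%N ->
  exists2 x, x \in r & \big[minn/k]_(i <- r) F i = F x.
Proof.
move=> + hk; elim: r => [//|y r IH] _; rewrite big_cons.
case: (eqVneq r [::]) => [->|/IH [x hx ->]].
  by exists y; rewrite ?inE ?eqxx // big_nil; apply/minn_idPl.
case: (leqP (F y) (F x)) => h; first by exists y; rewrite ?inE ?eqxx //; apply/minn_idPl.
by exists x; rewrite ?inE ?hx ?orbT //; apply/minn_idPr/ltnW.
Qed.

Lemma maxdeg_attained m (e : rel 'I_m.+1) : exists x, maxdeg e = deg e x.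
Proof.
have hI : (0 < #|'I_m.+1|)%N by rewrite card_ord.
by have [x hx] := bigop.eq_bigmax (deg e) hI; exists x.
Qed.

Lemma mindeg_attained m (e : rel 'I_m.+1) : exists x, mindeg e = deg e x.
Proof.
have hne : index_enum 'I_m.+1 != [::].
  by apply/eqP => h; move: (mem_index_enum (@ord0 m)); rewrite h.
have hle x : (deg e x <= m.+1)%N by apply: leq_trans (max_card _) _; rewrite card_ord.
by have [x _ hx] := bigmin_attained hne hle; exists x.
Qed.

Lemma deg_le_maxdeg n (e : rel 'I_n) x : (deg e x <= maxdeg e)%N.
Proof. exact: leq_bigmax. Qed.

Section SignlessLaplacian.
Variable R : realType.
Variables (n : nat) (e : rel 'I_n).
Hypotheses (sym_e : symmetric e) (irr_e : irreflexive e).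

Local Notation Q := (signlessLap R e).
Local Notation d x := ((deg e x)%:R : R).

Lemma sum_adj_row k : \sum_i ((e k i)%:R : R) = d k.
Proof.
rewrite /deg -sum1_card natr_sum [RHS]big_mkcond /=; apply: eq_bigr => i _.
by rewrite inE; case: (e k i).
Qed.

Lemma sum_adj_col k : \sum_i ((e i k)%:R : R) = d k.
Proof. by rewrite -sum_adj_row; apply: eq_bigr => i _; rewrite sym_e. Qed.

Lemma signlessLap_tr : Q^T = Q.
Proof. by apply/matrixP => i j; rewrite !mxE sym_e; case: (eqVneq i j) => [->|]. Qed.

Lemma signlessLapE i j : Q i j = if i == j then d i else (e i j)%:R.
Proof.
rewrite mxE; case: (eqVneq i j) => [->|_]; last by rewrite mulr0n add0r.
by rewrite irr_e addr0.
Qed.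

Lemma trace_signlessLap : \tr Q = \sum_i d i.
Proof. by apply: eq_bigr => i _; rewrite signlessLapE eqxx. Qed.

(* The diagonal of Q^2 is d_i^2 (from D^2) plus d_i (from A^2). *)
Lemma trace_signlessLap_sqr : \tr (Q *m Q) = \sum_i (d i ^+ 2 + d i).
Proof.
apply: eq_bigr => i _; rewrite mxE (bigD1 i) //= !signlessLapE eqxx -expr2.
congr (_ + _); rewrite -sum_adj_row [in RHS](bigD1 i) //= irr_e add0r.
apply: eq_bigr => j /negPf hj; rewrite !signlessLapE hj eq_sym hj sym_e.
by case: (e j i); rewrite ?mulr1 ?mulr0.
Qed.

Lemma Qspectrum_sum s : Qspectrum e s -> \sum_(q <- s) q = \sum_i d i.
Proof. by move=> hs; rewrite (sum_spectrum hs) trace_signlessLap. Qed.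

Lemma Qspectrum_sum_sqr_dev s a : Qspectrum e s -> n%:R * a = \sum_i d i ->
  \sum_(q <- s) (q - a) ^+ 2 = \sum_i d i + \sum_i (d i - a) ^+ 2.
Proof.
move=> hs ha; rewrite sum_sqr_dev_seq sum_sqr_dev_ord (sum_sqr_spectrum hs).
rewrite trace_signlessLap_sqr (size_spectrum hs) (Qspectrum_sum hs) big_split /= -ha.
ring.
Qed.

Lemma row_signlessLap (v : 'rV[R]_n) k :
  (v *m Q) 0 k = d k * v 0 k + \sum_i (e i k)%:R * v 0 i.
Proof.
rewrite mxE (bigD1 k) //= [X in _ = _ + X](bigD1 k) //= irr_e mul0r add0r.
rewrite signlessLapE eqxx mulrC; congr (_ + _); apply: eq_bigr => j /negPf hj.
by rewrite signlessLapE hj mulrC.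
Qed.

(* Gershgorin-type estimate at an entry of maximal modulus of an eigenvector:
   q w = d_k w + sum_{i ~ k} v_i, and |v_i| <= |w| = |v_k|. *)
Lemma eigen_entry_bounds (v : 'rV[R]_n) q k : v *m Q = q *: v ->
  (forall i, v 0 i ^+ 2 <= v 0 k ^+ 2) -> v 0 k != 0 ->
  [/\ 0 <= q, q <= 2 * d k & (q = 2 * d k -> forall i, e i k -> v 0 i = v 0 k)].
Proof.
move=> hv hmax hk0; have hk : (v *m Q) 0 k = (q *: v) 0 k by rewrite hv.
rewrite row_signlessLap mxE in hk.
set w := v 0 k in hk hmax hk0 *.
have hw : 0 < w ^+ 2 by rewrite lt_def sqrf_eq0 hk0 sqr_ge0.
have le_sqr x : x ^+ 2 <= w ^+ 2 -> w * x <= w ^+ 2 /\ - w ^+ 2 <= w * x.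
  move=> hx; have := sqr_ge0 (w - x); have := sqr_ge0 (w + x).
  rewrite sqrrB sqrrD; split; lra.
have key : q * w ^+ 2 = d k * w ^+ 2 + \sum_i (e i k)%:R * (w * v 0 i).
  rewrite expr2 mulrA -hk mulrDl; congr (_ + _); first by ring.
  by rewrite mulr_suml; apply: eq_bigr => i _; ring.
have hup : \sum_i (e i k)%:R * (w * v 0 i) <= d k * w ^+ 2.
  rewrite -sum_adj_col mulr_suml; apply: ler_sum => i _.
  by case: (e i k); rewrite ?mul0r ?mul1r //; case: (le_sqr _ (hmax i)).
have hlo : - (d k * w ^+ 2) <= \sum_i (e i k)%:R * (w * v 0 i).
  rewrite -sum_adj_col mulr_suml -sumrN; apply: ler_sum => i _.
  by case: (e i k); rewrite ?mul0r ?mul1r ?oppr0 //; case: (le_sqr _ (hmax i)).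
split.
- have : 0 <= q * w ^+ 2 by lra.
  by rewrite pmulr_lge0.
- have : q * w ^+ 2 <= (2 * d k) * w ^+ 2 by rewrite -mulrA; lra.
  by rewrite ler_pM2r.
- move=> hq i hik.
  have h0 : \sum_i (e i k)%:R * (w ^+ 2 - w * v 0 i) = 0.
    rewrite (eq_bigr (fun i => (e i k)%:R * w ^+ 2 - (e i k)%:R * (w * v 0 i))).
      by rewrite sumrB -mulr_suml sum_adj_col; move: key; rewrite hq -mulrA; lra.
    by move=> j _; ring.
  have hnn j : true -> 0 <= (e j k)%:R * (w ^+ 2 - w * v 0 j).
    move=> _; case: (e j k); rewrite ?mul0r ?mul1r // subr_ge0.
    by case: (le_sqr _ (hmax j)).
  have := psumr_eq0P hnn h0 (i := i) isT; rewrite hik mul1r.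
  by move/eqP; rewrite subr_eq0 expr2 => /eqP /(mulfI hk0).
Qed.

Lemma max_entry_exists (v : 'rV[R]_n) : v != 0 ->
  exists k, (forall i, v 0 i ^+ 2 <= v 0 k ^+ 2) /\ v 0 k != 0.
Proof.
move=> hv; have [i0 hi0] : exists i, v 0 i != 0.
  apply/existsP; apply: contraNT hv; rewrite negb_exists => /forallP h.
  by apply/eqP/rowP => i; rewrite mxE; apply/eqP; move: (h i); rewrite negbK.
case: (@arg_maxP _ _ _ i0 xpredT (fun i => v 0 i ^+ 2) isT) => k _ hk.
exists k; split; first by move=> i; exact: hk.
apply: contraNneq hi0 => h0; have := hk i0 isT; rewrite h0 expr0n /= => h.
by rewrite -sqrf_eq0 eq_le h sqr_ge0.
Qed.

Lemma Qspectrum_eigenvector s q : Qspectrum e s -> q \in s ->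
  exists2 v : 'rV_n, v *m Q = q *: v & v != 0.
Proof.
by move=> hs hq; apply/eigenvalueP; rewrite eigenvalue_root_char hs root_prod_XsubC.
Qed.

Local Notation Dl := ((maxdeg e)%:R : R).

Lemma Qspectrum_range s q : Qspectrum e s -> q \in s -> 0 <= q <= 2 * Dl.
Proof.
move=> hs hq; have [v hv v0] := Qspectrum_eigenvector hs hq.
have [k [hk1 hk2]] := max_entry_exists v0.
have [-> h2 _] := eigen_entry_bounds hv hk1 hk2.
by rewrite (le_trans h2) // ler_pM2l ?ltr0n // ler_nat deg_le_maxdeg.
Qed.

(* The value 2 Delta is attained only by regular connected graphs: the
   entries of maximal modulus of its eigenvector spread along edges, and
   every vertex carrying one has degree Delta. *)
Lemma Qspectrum_top_regular s q : connected_graph e -> Qspectrum e s ->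
  q \in s -> q = 2 * Dl -> regular e.
Proof.
move=> hc hs hq hqD; have [v hv v0] := Qspectrum_eigenvector hs hq.
have [k [hk1 hk2]] := max_entry_exists v0.
pose P := [pred i | v 0 i == v 0 k].
have hP i : P i -> d i = Dl /\ forall j, e j i -> v 0 j = v 0 i.
  move=> /eqP hi; have hi1 j : v 0 j ^+ 2 <= v 0 i ^+ 2 by rewrite hi.
  have hi2 : v 0 i != 0 by rewrite hi.
  have [_ h2 h3] := eigen_entry_bounds hv hi1 hi2.
  have hd : d i = Dl.
    by apply/eqP; rewrite eq_le ler_nat deg_le_maxdeg /=; move: h2; rewrite hqD; lra.
  by split => //; apply: h3; rewrite hqD hd.
have hall x : P x.
  apply: (connect_propagate (P := P)) (hc k x) _; last by rewrite /= eqxx.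
  move=> a b ha hab; have [_ h3] := hP a ha.
  by rewrite /= h3 1?sym_e //; exact: ha.
move=> x y; have [hx _] := hP x (hall x); have [hy _] := hP y (hall y).
by apply/eqP; rewrite -(eqr_nat R) hx hy.
Qed.
End SignlessLaplacian.

(* For a real symmetric matrix, a polynomial in it that vanishes on W keeps
   vanishing when every repeated linear factor is dropped: the minimal
   polynomial of a symmetric matrix has simple roots. *)
Section SymmetricAnnihilator.
Variables (R : realType) (m : nat).

(* S^2 X = 0 implies S X = 0 when S is symmetric, as tr ((SX)^T (SX)) = 0. *)
Lemma sym_sqr_kernel (S W : 'M[R]_m.+1) : S^T = S -> S * (S * W) = 0 -> S * W = 0.
Proof.
move=> hS h; set X := S * W.
have h0 : X^T * X = 0.
  have -> : X^T * X = W^T * (S * (S * W)) by rewrite /X -!mulmxE trmx_mul hS !mulmxA.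
  by rewrite h mulr0.
have ht : \tr (X^T * X) = \sum_i \sum_j X j i ^+ 2.
  by apply: eq_bigr => i _; rewrite -mulmxE mxE; apply: eq_bigr => j _; rewrite mxE expr2.
rewrite h0 mxtrace0 in ht.
apply/matrixP => j i; rewrite [RHS]mxE.
have hnn i' : true -> 0 <= \sum_j X j i' ^+ 2 by move=> _; apply: sumr_ge0 => *; exact: sqr_ge0.
have hnn2 j' : true -> 0 <= X j' i ^+ 2 by move=> _; exact: sqr_ge0.
have := psumr_eq0P hnn2 (psumr_eq0P hnn (esym ht) (i := i) isT) (i := j) isT.
by move/eqP; rewrite sqrf_eq0 => /eqP.
Qed.

Lemma sym_annihilator_roots (A : 'M[R]_m.+1) (N : {poly R}) (l : seq R) :
  A^T = A -> all (root N) l -> forall W,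
  horner_mx A (\prod_(x <- l) ('X - x%:P)) * W = 0 -> horner_mx A N * W = 0.
Proof.
move=> hA; elim: l => [|x l IH] /= => [_ W|/andP [hx hl] W].
  by rewrite big_nil rmorph1 mul1r => ->; rewrite mulr0.
rewrite big_cons mulrC rmorphM -mulrA => /(IH hl).
have [N' ->] := factor_theorem _ _ hx.
set S := horner_mx A ('X - x%:P); set C := horner_mx A N'.
have hS : S^T = S.
  by rewrite /S rmorphB /= horner_mx_X horner_mx_C linearB /= tr_scalar_mx hA.
have hC : C * S = S * C by rewrite -!rmorphM mulrC.
rewrite rmorphM -/S -/C => h.
have : S * (S * (C * W)) = 0.
  by rewrite !mulrA -(mulrA S S C) -hC mulrA -hC; move: h; rewrite !mulrA.
by move/(sym_sqr_kernel hS) => h2; rewrite hC -mulrA.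
Qed.
End SymmetricAnnihilator.

(* A graph whose edges are exactly the pairs separated by a set X with
   #|X| = #|~: X| is K_{n/2, n/2}: list X first, then its complement. *)
Lemma bipartition_Kbip m (e : rel 'I_m.+1) (X : {set 'I_m.+1}) r :
  #|X| = r -> #|~: X| = r -> (forall u v, e u v = ((u \in X) != (v \in X))) ->
  ~~ odd m.+1 /\ graph_iso e (@Kbip m.+1 m.+1./2).
Proof.
move=> hXr hXc hE.
have hn : (r + r = m.+1)%N by rewrite -{1}hXr -hXc cardsC card_ord.
have hhalf : m.+1./2 = r by rewrite -hn addnn doubleK.
split; first by rewrite -hn addnn odd_double.
pose t := enum X ++ enum (~: X).
have ht : size t = m.+1 by rewrite size_cat -!cardE hXr hXc.
have hu : uniq t.
  rewrite cat_uniq !enum_uniq andbT /=; apply/hasPn => z.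
  by rewrite !mem_enum inE => hz; apply/negP => hz2; move: hz; rewrite hz2.
have ginj : injective (fun i : 'I_m.+1 => nth ord0 t i).
  by move=> i j /eqP; rewrite nth_uniq ?ht ?ltn_ord // => /eqP; apply: val_inj.
pose p := perm ginj.
have hp (a : 'I_m.+1) : (p a \in X) = (a < r)%N.
  rewrite permE nth_cat -cardE hXr; case: ltnP => ha.
    by rewrite -(mem_enum (mem X)) mem_nth // -cardE hXr.
  apply/negbTE; have : nth ord0 (enum (~: X)) (a - r) \in enum (~: X).
    by apply: mem_nth; rewrite -cardE hXc; have := ltn_ord a; move: hn; lia.
  by rewrite mem_enum inE.
by exists (p^-1)%g => x y; rewrite /Kbip hhalf -(hp ((p^-1)%g x)) -(hp ((p^-1)%g y)) !permKV hE.
Qed.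

Definition adjmx (R : nzRingType) n (e : rel 'I_n) : 'M[R]_n := \matrix_(i, j) (e i j)%:R.

Definition nbhd n (e : rel 'I_n) (x : 'I_n) : {set 'I_n} := [set y | e x y].

Section RegularGraphs.
Variables (R : realType) (m : nat).
Local Notation n := m.+1.
Variables (e : rel 'I_n) (r : nat).
Hypotheses (sym_e : symmetric e) (irr_e : irreflexive e) (hreg : forall x, deg e x = r).

Local Notation Q := (signlessLap R e).
Local Notation A := (adjmx R e).

Lemma signlessLap_regular : A = Q - (r%:R)%:M.
Proof.
apply/matrixP => i j; rewrite !mxE hreg; case: (eqVneq i j) => [->|hij]; first by rewrite irr_e addr0 subrr.
by rewrite mulr0n subr0 add0r.
Qed.

Lemma adjmx_sqrE a j : (A * A) a j = #|[set b | e a b & e j b]|%:R.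
Proof.
rewrite -mulmxE mxE -sum1_card natr_sum [RHS]big_mkcond; apply: eq_bigr => b _.
by rewrite !mxE inE (sym_e b j); case: (e a b); case: (e j b); rewrite ?mulr0 ?mulr1.
Qed.

(* By Cayley-Hamilton, prod_q (X - q) vanishes at Q; Q being symmetric, so
   does N = X (X - r) (X - 2r), which has every q as a root.  Since
   N = (X - r)^3 - r^2 (X - r) and A = Q - r I, this says A^3 = r^2 A. *)
Lemma adjmx_cube (s : seq R) : Qspectrum e s ->
  (forall q, q \in s -> q * (q - r%:R) * (q - (r%:R + r%:R)) = 0) ->
  A * A * A = (r%:R ^+ 2)%:M * A.
Proof.
move=> hs hq; set c : {poly R} := (r%:R)%:P.
have hN : all (root ('X * ('X - c) * ('X - (c + c)))) s.
  by apply/allP => q /hq; rewrite /root !hornerE => ->.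
have := sym_annihilator_roots (W := 1) (signlessLap_tr R sym_e) hN.
rewrite -hs Cayley_Hamilton mul0r mulr1 => /(_ erefl).
have -> : 'X * ('X - c) * ('X - (c + c)) =
    ('X - c) * ('X - c) * ('X - c) - (r%:R ^+ 2)%:P * ('X - c).
  by rewrite rmorphXn; ring.
rewrite rmorphB !rmorphM /= !rmorphB /= horner_mx_X horner_mx_C -signlessLap_regular.
by move/eqP; rewrite subr_eq0 => /eqP.
Qed.

(* Reading A^3 = r^2 A at an edge ij: the common-neighbour counts of i with the
   r neighbours of j add up to r^2, so each equals r and every neighbour a of
   j shares all r neighbours of i. *)
Lemma adjmx_cube_nbhd : A * A * A = (r%:R ^+ 2)%:M * A ->
  forall i j a, e i j -> e a j -> nbhd e a = nbhd e i.
Proof.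
move=> hA i j a hij haj.
set c := fun b => #|[set y | e i y & e b y]|.
have hent : \sum_b ((c b)%:R : R) * (e b j)%:R = r%:R ^+ 2.
  have := congr1 (fun M : 'M[R]_n => M i j) hA.
  rewrite -[in RHS]mulmxE mul_scalar_mx mxE [in RHS]mxE mxE hij mulr1 => <-.
  by apply: eq_bigr => b _; rewrite adjmx_sqrE mxE.
have hdj := sum_adj_col R sym_e j; rewrite hreg in hdj.
have hc (b : 'I_n) : (c b <= r)%N.
  rewrite -(hreg i); apply: subset_leq_card; apply/subsetP => y.
  by rewrite !inE => /andP [].
have h0 : \sum_b (e b j)%:R * ((r%:R : R) - (c b)%:R) = 0.
  rewrite (eq_bigr (fun b => (e b j)%:R * (r%:R : R) - (c b)%:R * (e b j)%:R)).
    by rewrite sumrB -mulr_suml hdj hent expr2 subrr.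
  by move=> b _; ring.
have hnn b : true -> 0 <= ((e b j)%:R : R) * ((r%:R : R) - (c b)%:R).
  by move=> _; apply: mulr_ge0; rewrite ?ler0n // subr_ge0 ler_nat.
have := psumr_eq0P hnn h0 (i := a) isT; rewrite haj mul1r => /eqP.
rewrite subr_eq0 eqr_nat => /eqP hca.
have common x : (x = i) \/ (x = a) -> [set y | e i y & e a y] = nbhd e x.
  move=> hx; apply/eqP; rewrite eqEcard -/(c a) -hca -(hreg x) leqnn andbT.
  by apply/subsetP => y; rewrite !inE => /andP []; case: hx => ->.
by rewrite -common; [apply: common; left | right].
Qed.

(* If neighbours of a common vertex share their neighbourhood, a connected
   graph of positive degree is split by X = N(y0), y0 a neighbour of vertex 0:
   every vertex lies in exactly one of X and Y = N(0), and the edges are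
   exactly the pairs separated by X. *)
Lemma same_nbhd_Kbip : (forall i j a, e i j -> e a j -> nbhd e a = nbhd e i) ->
  connected_graph e -> (0 < r)%N -> ~~ odd n /\ graph_iso e (@Kbip n n./2).
Proof.
move=> same hc hr.
have [y0 hy0] : exists y, e ord0 y.
  have : (0 < #|nbhd e ord0|)%N by rewrite /nbhd -/(deg e ord0) hreg.
  by rewrite card_gt0 => /set0Pn [y]; rewrite inE => hy; exists y.
set X := nbhd e y0; set Y := nbhd e ord0.
have hY a : e ord0 a -> nbhd e a = X by move=> ha; apply: (same y0 ord0 a); rewrite sym_e.
have hX x : e y0 x -> nbhd e x = Y by move=> hx; apply: (same ord0 y0 x) => //; rewrite sym_e.
have hcov z : (z \in X) || (z \in Y).
  apply: (connect_propagate (P := [pred z | (z \in X) || (z \in Y)])) (hc ord0 z) _.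
    move=> a b /=; rewrite !inE => /orP [ha|ha] hab.
      by move: (hX a ha) => /setP /(_ b); rewrite !inE hab => <-; rewrite orbT.
    by move: (hY a ha) => /setP /(_ b); rewrite !inE hab => <-.
  by rewrite /= !inE sym_e hy0.
have hdis z : (z \in Y) = (z \notin X).
  have := hcov z; case hzX : (z \in X); case hzY : (z \in Y) => //= _.
  move: hzX hzY; rewrite !inE => hzX hzY.
  have : z \in nbhd e z by rewrite (hY z hzY) /X inE.
  by rewrite inE irr_e.
have hE u v : e u v = ((u \in X) != (v \in X)).
  case huX : (u \in X).
    have huX' : e y0 u by move: huX; rewrite /X inE.
    by move: (hX u huX') => /setP /(_ v); rewrite [v \in nbhd e u]inE => ->; rewrite hdis.
  have : u \in Y by rewrite hdis huX.
  rewrite inE => /hY /setP /(_ v); rewrite [v \in nbhd e u]inE => ->.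
  by case: (v \in X).
have hcY : Y = ~: X by apply/setP => z; rewrite [in RHS]inE -hdis.
apply: (bipartition_Kbip (r := r)) hE; first by rewrite /X /nbhd -/(deg e y0) hreg.
by rewrite -hcY /Y /nbhd -/(deg e ord0) hreg.
Qed.

(* Conversely, A^3 = r^2 A confines the Q-spectrum to {0, r, 2r}: an eigenvalue
   q of Q gives the eigenvalue t = q - r of A with t^3 = r^2 t. *)
Lemma adjmx_cube_spectrum (s : seq R) : Qspectrum e s ->
  A * A * A = (r%:R ^+ 2)%:M * A ->
  forall q, q \in s -> q * (q - r%:R) * (q - (r%:R + r%:R)) = 0.
Proof.
move=> hs hA q hq; have [v hv v0] := Qspectrum_eigenvector hs hq.
set t := q - r%:R.
have hvA : v *m A = t *: v.
  by rewrite signlessLap_regular mulmxBr hv mul_mx_scalar -scalerBl.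
have hv3 : v *m (A *m A *m A) = t ^+ 3 *: v.
  by rewrite !mulmxA hvA -!scalemxAl hvA -scalemxAl hvA !scalerA -expr2 -exprSr.
have hvr : v *m ((r%:R ^+ 2)%:M *m A) = (r%:R ^+ 2 * t) *: v.
  by rewrite mulmxA mul_mx_scalar -scalemxAl hvA scalerA.
have : (t ^+ 3 - r%:R ^+ 2 * t) *: v = 0.
  by rewrite scalerBl -hv3 -hvr !mulmxE hA subrr.
move/eqP; rewrite scaler_eq0 (negbTE v0) orbF => /eqP h0.
by rewrite -h0 /t; ring.
Qed.

(* A graph whose edges are the pairs separated by a predicate P satisfies
   A^3 = r^2 A: (A^2)_{aj} = r [P a = P j], and then (A^3)_{ij} = r^2 [P i != P j]. *)
Lemma bipartite_adjmx_cube (P : pred 'I_n) : (forall x y, e x y = (P x != P y)) ->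
  A * A * A = (r%:R ^+ 2)%:M * A.
Proof.
move=> hE.
have hside x : #|[set b | P b != P x]| = r.
  by rewrite -(hreg x); apply: eq_card => b; rewrite !inE hE eq_sym.
have hA2 a j : (A * A) a j = (P a == P j)%:R * r%:R.
  rewrite adjmx_sqrE; have -> : [set b | e a b & e j b] = [set b | (P a != P b) && (P j != P b)].
    by apply/setP => b; rewrite !inE !hE.
  case: (eqVneq (P a) (P j)) => h; rewrite ?mul1r ?mul0r.
    by rewrite -(hside a); congr _%:R; apply/eq_card => b; rewrite !inE -h andbb eq_sym.
  suff -> : [set b | (P a != P b) && (P j != P b)] = set0 by rewrite cards0.
  by apply/setP => b; rewrite !inE; move: h; case: (P a); case: (P j); case: (P b).
apply/matrixP => i j; rewrite -!mulmxE mul_scalar_mx.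
rewrite [LHS]mxE [RHS]mxE [A i j]mxE.
have -> : \sum_a (A *m A) i a * A a j = r%:R * #|[set a | (P a == P i) && e a j]|%:R.
  rewrite -sum1_card natr_sum mulr_sumr [RHS]big_mkcond; apply: eq_bigr => a _.
  rewrite mulmxE hA2 mxE inE eq_sym.
  by case: (_ == _); case: (e a j); rewrite ?mul1r ?mul0r ?mulr1 ?mulr0.
rewrite hE; case: (eqVneq (P i) (P j)) => h /=.
  suff -> : [set a | (P a == P i) && e a j] = set0 by rewrite cards0 !mulr0.
  by apply/setP => a; rewrite !inE hE h; case: (_ == _).
rewrite mulr1 -(hside j) expr2; congr (_ * _%:R); apply: eq_card => a.
by rewrite !inE hE; move: h; case: (P i); case: (P j); case: (P a).
Qed.

Lemma Qspectrum_Kbip (s : seq R) : Qspectrum e s -> connected_graph e -> (0 < r)%N ->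
  (forall q, q \in s -> q * (q - r%:R) * (q - (r%:R + r%:R)) = 0) <->
  ~~ odd n /\ graph_iso e (@Kbip n n./2).
Proof.
move=> hs hc hr; split=> [hq | [_ [f hf]]].
  exact: same_nbhd_Kbip (adjmx_cube_nbhd (adjmx_cube hs hq)) hc hr.
apply: adjmx_cube_spectrum hs _.
exact: (bipartite_adjmx_cube (P := fun x => (f x < n./2)%N)).
Qed.
End RegularGraphs.

Section SignlessEnergy.
Variables (R : realType) (m : nat).
Local Notation n := m.+1.
Variables (e : rel 'I_n) (s : seq R).
Hypotheses (hm : (0 < m)%N) (sym_e : symmetric e) (irr_e : irreflexive e)
  (hc : connected_graph e) (hs : Qspectrum e s).

Local Notation a := (avgdeg R e).
Local Notation d x := ((deg e x)%:R : R).
Local Notation D := ((2 * nedges e)%:R : R).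
Local Notation Dl := ((maxdeg e)%:R : R).

Lemma degree_sum : \sum_i d i = D.
Proof. by rewrite -(handshake sym_e irr_e) natr_sum. Qed.

Lemma avgdegE : n%:R * a = D.
Proof. by rewrite /avgdeg mulrC divfK // pnatr_eq0. Qed.

Lemma Qspectrum_dev : \sum_(q <- s) (q - a) ^+ 2 = D + \sum_i (d i - a) ^+ 2.
Proof.
rewrite (Qspectrum_sum_sqr_dev sym_e irr_e hs); first by congr (_ + _); exact: degree_sum.
by rewrite avgdegE; apply/esym; exact: degree_sum.
Qed.

(* A non-regular graph has a vertex of degree below Delta, so 2m/n < Delta. *)
Lemma avgdeg_lt_maxdeg : ~ regular e -> a < Dl.
Proof.
move=> hnr; have [z hz] : exists z, (deg e z < maxdeg e)%N.
  apply/existsP; apply: contraT => /existsPn h; exfalso; apply: hnr => x y.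
  have hx w : deg e w = maxdeg e by apply/eqP; rewrite eqn_leq deg_le_maxdeg leqNgt h.
  by rewrite !hx.
rewrite -(ltr_pM2l (ltr0Sn R m)) avgdegE -degree_sum.
have -> : n%:R * Dl = \sum_(i < n) Dl by rewrite sumr_const card_ord mulr_natl.
rewrite (bigD1 z) //= [X in _ < X](bigD1 z) //=.
by rewrite ltr_leD ?ltr_nat // ler_sum // => i _; rewrite ler_nat deg_le_maxdeg.
Qed.

(* With B = 2 Delta - 2m/n, every |q - 2m/n| < B because
   0 <= q < 2 Delta; hence sum (q - 2m/n)^2 < B QE, while the left-hand side is
   2m + sum_i (d_i - 2m/n)^2 >= 2m + (Delta - delta)^2 / 2. *)
Lemma QE_nonregular : ~ regular e ->
  (D + 2^-1 * (Dl - (mindeg e)%:R) ^+ 2) / (2 * Dl - a) < QE e s.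
Proof.
move=> hnr; have ha := avgdeg_lt_maxdeg hnr.
have ha0 : 0 <= a by rewrite /avgdeg divr_ge0 ?ler0n.
set B := 2 * Dl - a; have hB : 0 < B by rewrite /B; lra.
have hlt q : q \in s -> `|q - a| < B.
  move=> hq; have /andP [h0 h1] := Qspectrum_range sym_e irr_e hs hq.
  have h2 : q != 2 * Dl by apply/eqP => /(Qspectrum_top_regular sym_e irr_e hc hs hq).
  have h3 : q < 2 * Dl by rewrite lt_neqAle h2 h1.
  by rewrite ltr_norml /B; apply/andP; split; lra.
have hle q : q \in s -> `|q - a| <= B by move=> hq; exact/ltW/hlt.
have hD : 0 < D.
  rewrite -degree_sum (bigD1 ord0) //= ltr_pwDl ?ltr0n ?connected_deg_gt0 //.
  by apply: sumr_ge0 => i _; rewrite ler0n.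
have hsq : \sum_(q <- s) (q - a) ^+ 2 < B * QE e s.
  rewrite lt_neqAle (sum_sqr_le_bound (u := fun q => q - a) hle) andbT.
  apply/eqP => /(sum_sqr_eq_bound (u := fun q => q - a) hle) hext.
  have : \sum_(q <- s) (q - a) ^+ 2 = 0.
    rewrite big_seq big1 // => q hq; have := hlt q hq.
    by case: (hext q hq) => [/normr0P/eqP -> _|->]; rewrite ?expr0n ?ltxx.
  rewrite Qspectrum_dev => h0; have : 0 <= \sum_i (d i - a) ^+ 2.
    by apply: sumr_ge0 => i _; exact: sqr_ge0.
  lra.
have hdev : 2^-1 * (Dl - (mindeg e)%:R) ^+ 2 <= \sum_i (d i - a) ^+ 2.
  have [x ->] := maxdeg_attained e; have [y ->] := mindeg_attained e.
  exact: sum_sqr_dev_ge_range.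
rewrite ltr_pdivrMr // [_ * B]mulrC; apply: le_lt_trans hsq.
by rewrite Qspectrum_dev lerD2l.
Qed.

Lemma regular_dev r : (forall x, deg e x = r) ->
  [/\ a = r%:R, forall q, q \in s -> `|q - a| <= r%:R
    & \sum_(q <- s) (q - a) ^+ 2 = r%:R * n%:R].
Proof.
move=> hreg.
have hDr : D = r%:R * n%:R.
  rewrite -degree_sum (eq_bigr (fun _ => (r%:R : R))) => [|i _]; last by rewrite hreg.
  by rewrite sumr_const card_ord mulr_natr.
have ha : a = r%:R.
  by apply: (mulfI (_ : n%:R != 0 :> R)); rewrite ?pnatr_eq0 // avgdegE hDr mulrC.
have hDl : Dl = r%:R by have [x ->] := maxdeg_attained e; rewrite hreg.
split => // [q hq|].
  have /andP [h0 h1] := Qspectrum_range sym_e irr_e hs hq.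
  by rewrite ha ler_norml; rewrite hDl in h1; apply/andP; split; lra.
rewrite Qspectrum_dev big1 ?addr0 // => i _.
by rewrite hreg ha subrr expr0n.
Qed.

(* Hence r n = sum (q - r)^2 <= r QE, i.e. QE >= n. *)
Lemma QE_regular_ge : regular e -> n%:R <= QE e s.
Proof.
move=> hreg; have [_ hle hsq] := regular_dev (r := deg e ord0) (hreg^~ ord0).
have hr : (0 : R) < (deg e ord0)%:R by rewrite ltr0n connected_deg_gt0.
by have := sum_sqr_le_bound (u := fun q => q - a) hle; rewrite hsq ler_pM2l.
Qed.

(* Equality QE = n forces every |q - r| into {0, r}, i.e. the Q-spectrum into
   {0, r, 2r}, which characterises K_{r,r}. *)
Lemma QE_regular_eq : regular e ->
  QE e s = n%:R <-> ~~ odd n /\ graph_iso e (@Kbip n n./2).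
Proof.
move=> hreg; set r := deg e ord0; have hr' x : deg e x = r by exact: hreg.
have [ha hle hsq] := regular_dev hr'.
have hr : (0 < r)%N by exact: connected_deg_gt0.
have hr0 : (0 : R) <= r%:R by rewrite ler0n.
rewrite -(Qspectrum_Kbip sym_e irr_e hr' hs hc hr).
apply: (@iff_trans _ (forall q, q \in s -> `|q - a| = 0 \/ `|q - a| = r%:R)).
  rewrite -(sum_sqr_eq_bound (u := fun q => q - a) hle) hsq.
  rewrite /QE /=; split=> [-> //|h]; apply: (mulfI _ (esym h)).
  by rewrite pnatr_eq0 -lt0n.
have hroot q : q * (q - r%:R) * (q - (r%:R + r%:R)) = (q - a) * ((q - a) ^+ 2 - r%:R ^+ 2).
  by rewrite ha; ring.
split=> h q hq; first by rewrite hroot; apply/(abs_0_or_eq _ hr0); exact: h.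
by apply/(abs_0_or_eq _ hr0); rewrite -hroot; exact: h.
Qed.
End SignlessEnergy.

Theorem mainTheorem11 (R : realType) (n : nat) (e : rel 'I_n) (s : seq R) :
  (2 <= n)%N -> simple_graph e -> connected_graph e ->
  Qspectrum e s -> gamma_last e s = 0 ->
  (~ regular e ->
     QE e s > ((2 * nedges e)%:R + 2^-1 * ((maxdeg e)%:R - (mindeg e)%:R) ^+ 2)
              / (2 * (maxdeg e)%:R - avgdeg R e)) /\
  (regular e ->
     QE e s >= n%:R /\
     (QE e s = n%:R <-> (~~ odd n /\ graph_iso e (@Kbip n n./2)))).
Proof.
case: n e s => [//|m] e s hm [sym_e irr_e] hc hs _.
split; first exact: QE_nonregular.
move=> hreg; split; first exact: QE_regular_ge.
exact: QE_regular_eq.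
Qed.
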